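(* Every consistent $L_\theta$-theory of the form $$T_\theta\cup\Big\{\sum_k\bigcap_l\mathrm{Ker}(\rho_{j,k,l})=\sum_k\bigcap_l\mathrm{Ker}(\eta_{j,k,l}):j\in\mathcal J\Big\},$$ with $\mathcal J$ an arbitrary index set, all sums and intersections finite and all $\rho_{j,k,l},\eta_{j,k,l}\in K[X]$, is equivalent to $T_\theta^C$ for some kernel configuration $C$.
   Context: Setting: $L$ is a first-order language, $T$ a model-complete $L$-theory and $K$ a field. There are $L$-formulas without parameters which define, in every model $\mathcal M\models T$, a nontrivial (infinite) $K$-vector space $\mathbb V=\mathbb V^{\mathcal M}$; elements of $\mathbb V$ are treated as single elements. $L_\theta=L\cup\{\theta\}$, $\theta$ a new unary function symbol; $T_\theta$ is $T$ plus axioms saying $\theta|_{\mathbb V}$ is a $K$-linear endomorphism of $\mathbb V$ and $\theta(x)=0$ for $x\notin\mathbb V$. For $\rho=\sum_i(\rho)_iX^i\in K[X]$, $\rho[\theta]:=\sum_i(\rho)_i\theta^i$, $\mathrm{Ker}(\rho)=\{v\in\mathbb V:\rho[\theta](v)=0\}$; an equation of sums of intersections of kernels is the sentence asserting equality of these definable sets. $K[X]_{\mathrm{irr}}$ is the set of monic irreducible polynomials. A kernel configuration is a pair $C=(c,d)$ with $c:K[X]_{\mathrm{irr}}\to\mathbb N\cup\{\infty\}$ and $d\in\mathbb N_{>0}\cup\{\infty\}$ such that $d=\infty$ or $d=\sum_f\deg(f)c(f)$; write $C(f)=c(f)$. $C$ is algebraic if $d<\infty$, with minimal polynomial $\mathrm{MiPo}(C)=\prod_ff^{C(f)}$,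 and transcendental otherwise. $\theta$ is a $C$-endomorphism if $\mathrm{Ker}(\mathrm{MiPo}(C))=\mathbb V$ (algebraic case), resp. $\mathrm{Ker}(f^{C(f)})=\mathrm{Ker}(f^{C(f)+1})$ for all $f$ with $C(f)<\infty$ (transcendental case). $T^C_\theta:=T_\theta\cup\{\theta|_{\mathbb V}\text{ is a }C\text{-endomorphism}\}$. Two theories are equivalent if they have the same models. *)

From mathcomp Require Import all_boot all_order all_algebra.
From Stdlib Require List.
Set Implicit Arguments.
Unset Strict Implicit.
Unset Printing Implicit Defensive.
Import GRing.Theory.
Local Open Scope ring_scope.

Record language := Language {
  fsym : Type; fari : fsym -> nat;
  rsym : Type; rari : rsym -> nat }.

Section FOL.
Variable L : language.

Inductive term :=
  | tvar of nat
  | tapp (f : fsym L) of ('I_(fari f) -> term).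

Inductive formula :=
  | feq of term & term
  | frel (r : rsym L) of ('I_(rari r) -> term)
  | fbot
  | fnot of formula
  | fand of formula & formula
  | for_ of formula & formula
  | fimp of formula & formula
  | fall of nat & formula
  | fex of nat & formula.

Record structure := Structure {
  carrier :> Type;
  inhab : carrier;
  finterp : forall f : fsym L, ('I_(fari f) -> carrier) -> carrier;
  rinterp : forall r : rsym L, ('I_(rari r) -> carrier) -> Prop }.

Fixpoint teval (M : structure) (s : nat -> M) (t : term) : M :=
  match t with
  | tvar n => s n
  | tapp f a => finterp (fun i => teval s (a i))
  end.

Definition upd (M : structure) (s : nat -> M) (n : nat) (m : M) : nat -> M :=
  fun k => if k == n then m else s k.

Fixpoint sat (M : structure) (s : nat -> M) (phi : formula) : Prop :=
  match phi with
  | feq t u => teval s t = teval s u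
  | frel r a => rinterp (fun i => teval s (a i))
  | fbot => False
  | fnot p => ~ sat s p
  | fand p q => sat s p /\ sat s q
  | for_ p q => sat s p \/ sat s q
  | fimp p q => sat s p -> sat s q
  | fall n p => forall m : M, sat (upd s n m) p
  | fex n p => exists m : M, sat (upd s n m) p
  end.

Fixpoint tfv (x : nat) (t : term) : Prop :=
  match t with
  | tvar n => x = n
  | tapp f a => exists i, tfv x (a i)
  end.

Fixpoint fv (x : nat) (phi : formula) : Prop :=
  match phi with
  | feq t u => tfv x t \/ tfv x u
  | frel r a => exists i, tfv x (a i)
  | fbot => False
  | fnot p => fv x p
  | fand p q | for_ p q | fimp p q => fv x p \/ fv x q
  | fall n p | fex n p => x <> n /\ fv x p
  end.

Definition fv_below (k : nat) (phi : formula) : Prop :=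
  forall x, fv x phi -> (x < k)%N.

Definition sentence (phi : formula) : Prop := forall x, ~ fv x phi.

Definition theory := formula -> Prop.
Definition is_theory (T : theory) : Prop := forall phi, T phi -> sentence phi.

Definition models (T : theory) (M : structure) : Prop :=
  forall phi, T phi -> forall s : nat -> M, sat s phi.

Definition embedding (M N : structure) (h : M -> N) : Prop :=
  injective h /\
  (forall f (a : 'I_(fari f) -> M), h (finterp a) = finterp (fun i => h (a i))) /\
  (forall r (a : 'I_(rari r) -> M), rinterp a <-> rinterp (fun i => h (a i))).

Definition elementary (M N : structure) (h : M -> N) : Prop :=
  forall (phi : formula) (s : nat -> M), sat s phi <-> sat (fun n => h (s n)) phi.

Definition model_complete (T : theory) : Prop :=
  forall M N : structure, models T M -> models T N ->
  forall h : M -> N, embedding h -> elementary h.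

End FOL.

Section VS.
Variable L : language.
Variable K : fieldType.

(* parameter-free formulas defining V, its zero, its addition (as a graph)
   and the scalar multiplication by each a in K (as a graph) *)
Record vsdef := VSDef {
  phiV : formula L;      (* x0 \in V *)
  phi0 : formula L;      (* x0 = 0_V *)
  phiadd : formula L;    (* x0, x1 \in V /\ x2 = x0 + x1 *)
  phisc : K -> formula L (* x0 \in V /\ x1 = a . x0 *) }.

Record vsops (M : structure L) := VSOps {
  vin : M -> Prop;
  vzero : M;
  vadd : M -> M -> M;
  vscale : K -> M -> M }.

Definition defines (D : vsdef) (M : structure L) (o : vsops M) : Prop :=
  (forall s : nat -> M, sat s (phiV D) <-> vin o (s 0%N)) /\
  (forall s : nat -> M, sat s (phi0 D) <-> s 0%N = vzero o) /\
  (forall s : nat -> M, sat s (phiadd D) <->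
      [/\ vin o (s 0%N), vin o (s 1%N) & s 2%N = vadd o (s 0%N) (s 1%N)]) /\
  (forall (a : K) (s : nat -> M), sat s (phisc D a) <->
      vin o (s 0%N) /\ s 1%N = vscale o a (s 0%N)).

Definition is_vspace (M : structure L) (o : vsops M) : Prop :=
  let V := vin o in let z := vzero o in let ad := vadd o in let sc := vscale o in
  [/\ V z,
      (forall u v, V u -> V v -> V (ad u v)),
      (forall a v, V v -> V (sc a v)),
      (forall u v w, V u -> V v -> V w -> ad u (ad v w) = ad (ad u v) w) &
      (forall u v, V u -> V v -> ad u v = ad v u)] /\
  [/\ (forall v, V v -> ad z v = v),
      (forall v, V v -> ad v (sc (-1) v) = z) &
      (forall v, V v -> sc 1 v = v)] /\
  [/\ (forall a b v, V v -> sc (a * b) v = sc a (sc b v)),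
      (forall a u v, V u -> V v -> sc a (ad u v) = ad (sc a u) (sc a v)) &
      (forall a b v, V v -> sc (a + b) v = ad (sc a v) (sc b v))].

Definition vs_infinite (M : structure L) (o : vsops M) : Prop :=
  forall l : list M, exists v, vin o v /\ ~ List.In v l.

Definition defines_vs_in (T : theory L) (D : vsdef) : Prop :=
  [/\ fv_below 1 (phiV D), fv_below 1 (phi0 D), fv_below 3 (phiadd D),
      (forall a, fv_below 2 (phisc D a)) &
      forall M : structure L, models T M ->
        exists o : vsops M, [/\ defines D o, is_vspace o & vs_infinite o]].

(* L_theta-structures: an L-structure together with the interpretation *)
(* theta : M -> M of the new unary function symbol.                     *)

Section Theta.
Variable M : structure L.
Variable o : vsops M.
Variable theta : M -> M.

Definition peval (rho : {poly K}) (v : M) : M :=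
  foldr (fun i acc => vadd o (vscale o rho`_i (iter i theta v)) acc)
        (vzero o) (iota 0 (size rho)).

Definition inKer (rho : {poly K}) (v : M) : Prop :=
  vin o v /\ peval rho v = vzero o.

Definition inCapKer (rhos : seq {poly K}) (v : M) : Prop :=
  vin o v /\ forall rho, rho \in rhos -> inKer rho v.

Fixpoint inSumCapKer (rhoss : seq (seq {poly K})) (v : M) : Prop :=
  match rhoss with
  | [::] => v = vzero o
  | rhos :: rest => exists w u, [/\ inCapKer rhos w, inSumCapKer rest u &
                                    v = vadd o w u]
  end.

Definition theta_axioms : Prop :=
  [/\ (forall v, vin o v -> vin o (theta v)),
      (forall u v, vin o u -> vin o v -> theta (vadd o u v) = vadd o (theta u) (theta v)),
      (forall a v, vin o v -> theta (vscale o a v) = vscale o a (theta v)) &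
      (forall x, ~ vin o x -> theta x = vzero o)].

Definition kernel_equation (e : seq (seq {poly K}) * seq (seq {poly K})) : Prop :=
  forall v, inSumCapKer e.1 v <-> inSumCapKer e.2 v.

End Theta.

Definition models_Ttheta (T : theory L) (D : vsdef) (M : structure L)
    (theta : M -> M) : Prop :=
  models T M /\ forall o : vsops M, defines D o -> theta_axioms o theta.

Definition models_TthetaE (T : theory L) (D : vsdef) (J : Type)
    (E : J -> seq (seq {poly K}) * seq (seq {poly K}))
    (M : structure L) (theta : M -> M) : Prop :=
  models_Ttheta T D theta /\
  forall o : vsops M, defines D o -> forall j, kernel_equation o theta (E j).

(* Kernel configurations. c : K[X]_irr -> N \cup {oo} is modelled as    *)
(* {poly K} -> option nat (None = oo; values off K[X]_irr are ignored), *)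
(* d \in N_{>0} \cup {oo} as option nat (None = oo).                    *)

Definition monic_irr (f : {poly K}) : Prop := f \is monic /\ irreducible_poly f.

Definition finite_support (c : {poly K} -> option nat) (s : seq {poly K}) : Prop :=
  [/\ uniq s, (forall f, f \in s -> monic_irr f),
      (forall f, monic_irr f -> f \notin s -> c f = Some 0%N) &
      (forall f, f \in s -> c f <> None)].

Definition is_kconf (c : {poly K} -> option nat) (d : option nat) : Prop :=
  d <> Some 0%N /\
  (d = None \/ exists s, finite_support c s /\
       d = Some (\sum_(f <- s) (size f).-1 * odflt 0%N (c f))%N).

Definition mipo_along (c : {poly K} -> option nat) (s : seq {poly K}) : {poly K} :=
  \prod_(f <- s) f ^+ odflt 0%N (c f).

Definition C_endo (M : structure L) (o : vsops M) (theta : M -> M)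
    (c : {poly K} -> option nat) (d : option nat) : Prop :=
  match d with
  | Some _ =>
      forall s, finite_support c s ->
        forall v, vin o v <-> inKer o theta (mipo_along c s) v
  | None =>
      forall f, monic_irr f -> forall n, c f = Some n ->
        forall v, inKer o theta (f ^+ n) v <-> inKer o theta (f ^+ n.+1) v
  end.

Definition models_TthetaC (T : theory L) (D : vsdef)
    (c : {poly K} -> option nat) (d : option nat)
    (M : structure L) (theta : M -> M) : Prop :=
  models_Ttheta T D theta /\
  forall o : vsops M, defines D o -> C_endo o theta c d.

End VS.

(* Let polynomials act on V through theta.  An intersection of kernels is the
   kernel of a gcd and a sum of kernels the kernel of an lcm, so every axiom
   reads Ker r1 = Ker r2, i.e. Ker ri is contained in Ker gcd(r1, r2).  For
   h | r <> 0, Ker r is contained in Ker h iff, for each monic irreducible f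
   dividing r / h, the chain Ker f^n stabilises at the multiplicity of f in h.
   Taking C(f) to be the least multiplicity so constrained gives a
   transcendental configuration; if some axiom forces Ker h0 = V with h0 <> 0,
   capping these values by the multiplicities in h0 gives an algebraic one
   whose minimal polynomial kills V, and since V is nontrivial in a model of
   the theory its degree is positive. *)

From HB Require Import structures.
From mathcomp Require Import all_boot all_order all_algebra.
From mathcomp Require Import boolp ring.
Set Implicit Arguments. Unset Strict Implicit. Unset Printing Implicit Defensive.
Import GRing.Theory.
Local Open Scope ring_scope.

Section PolyAction.
Variables (K : fieldType) (V : lmodType K) (th : {linear V -> V}).
Implicit Types (p q : {poly K}) (u v w : V).

Definition pact p v : V := \sum_(i < size p) p`_i *: iter i th v.

Lemma pact_widen n p v : (size p <= n)%N -> pact p v = \sum_(i < n) p`_i *: iter i th v.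
Proof.
move=> le_pn; rewrite /pact (big_ord_widen n (fun i => p`_i *: iter i th v) le_pn).
rewrite big_mkcond /=; apply: eq_bigr => i _; case: ltnP => // le_pi.
by rewrite nth_default // scale0r.
Qed.

Lemma pactD p q v : pact (p + q) v = pact p v + pact q v.
Proof.
pose n := maxn (size p) (size q).
rewrite (@pact_widen n) ?(leq_trans (size_polyD _ _)) //.
rewrite (@pact_widen n p) ?leq_maxl // (@pact_widen n q) ?leq_maxr // -big_split.
by apply: eq_bigr => i _; rewrite coefD scalerDl.
Qed.

Lemma pactZ a p v : pact (a *: p) v = a *: pact p v.
Proof.
rewrite (@pact_widen (size p)) ?size_scale_leq // scaler_sumr.
by apply: eq_bigr => i _; rewrite coefZ scalerA.
Qed.

Lemma iter_linear i : linear (iter i th).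
Proof. by move=> a u w; elim: i => //= i ->; rewrite linearP. Qed.

Lemma pact_is_linear p : linear (pact p).
Proof.
move=> a u w; rewrite /pact scaler_sumr -big_split; apply: eq_bigr => i _ /=.
by rewrite iter_linear scalerDr !scalerA mulrC.
Qed.

HB.instance Definition _ p :=
  GRing.isLinear.Build K V V *:%R (pact p) (pact_is_linear p).

Lemma pactC c v : pact c%:P v = c *: v.
Proof. by rewrite (@pact_widen 1) ?size_polyC_leq1 // big_ord1 coefC. Qed.

Lemma pact1 v : pact 1 v = v.
Proof. by rewrite -polyC1 pactC scale1r. Qed.

Lemma pact0 v : pact 0 v = 0.
Proof. by rewrite -polyC0 pactC scale0r. Qed.

Lemma pactMX p v : pact (p * 'X) v = pact p (th v).
Proof.
have [->|p_neq0] := eqVneq p 0; first by rewrite mul0r !pact0.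
rewrite {1}/pact size_mulX // big_ord_recl coefMX eqxx scale0r add0r.
by apply: eq_bigr => i _; rewrite coefMX /= -iterSr.
Qed.

Lemma pact_comm p v : th (pact p v) = pact p (th v).
Proof.
rewrite /pact linear_sum; apply: eq_bigr => i _.
by rewrite linearZ /= -iterS iterSr.
Qed.

Lemma pactM p q v : pact (p * q) v = pact p (pact q v).
Proof.
elim/poly_ind: p v => [|p c IHp] v; first by rewrite mul0r !pact0.
rewrite mulrDl pactD mulrAC pactMX IHp pactD pactMX pact_comm.
by rewrite !mul_polyC pactZ pactC.
Qed.

Lemma pactN p v : pact (- p) v = - pact p v.
Proof. by rewrite -[- p]scaleN1r pactZ scaleN1r. Qed.

Lemma pactB p q v : pact (p - q) v = pact p v - pact q v.
Proof. by rewrite pactD pactN. Qed.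

Lemma pact_dvdp_eq0 p q v : p %| q -> pact p v = 0 -> pact q v = 0.
Proof. by case/dvdpP => r -> pv0; rewrite pactM pv0 raddf0. Qed.

Lemma pact_gcdp_eq0 p q v :
  pact (gcdp p q) v = 0 <-> pact p v = 0 /\ pact q v = 0.
Proof.
split=> [g0 | [p0 q0]].
  by split; apply: pact_dvdp_eq0 g0; rewrite ?dvdp_gcdl ?dvdp_gcdr.
have [[a b] /= /andP[dvd_g _]] := Bezoutp p q.
apply: pact_dvdp_eq0 dvd_g _.
by rewrite pactD !pactM p0 q0 !raddf0 addr0.
Qed.

End PolyAction.

Section KernelSums.
Variables (K : fieldType) (V : lmodType K) (th : {linear V -> V}).
Implicit Types (p q : {poly K}) (v : V).

Definition lcmp p q := p * (q %/ gcdp p q).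

Lemma pact_lcmp_eq0 p q v :
  pact th (lcmp p q) v = 0 <->
  exists a b, [/\ pact th p a = 0, pact th q b = 0 & v = a + b].
Proof.
have [-> | p_neq0] := eqVneq p 0.
  rewrite /lcmp mul0r pact0; split=> // _.
  by exists v, 0; rewrite pact0 raddf0 addr0.
set g := gcdp p q.
have Dp : p %/ g * g = p by rewrite divpK // dvdp_gcdl.
have Dq : q %/ g * g = q by rewrite divpK // dvdp_gcdr.
have Dl : lcmp p q = p %/ g * q.
  by rewrite /lcmp -/g -[p in LHS]Dp -[q in RHS]Dq; ring.
split=> [lv0 | [a [b [pa0 qb0 ->]]]]; last first.
  rewrite linearD /= {1}/lcmp mulrC pactM pa0 Dl pactM qb0.
  by rewrite !raddf0 addr0.
have /Bezout_eq1_coprimepP[[u w] /= Duw] : coprimep (p %/ g) (q %/ g).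
  by rewrite coprimep_div_gcd ?p_neq0.
exists (pact th (w * (q %/ g)) v), (pact th (u * (p %/ g)) v); split.
- by rewrite -pactM mulrCA (_ : p * _ = lcmp p q) // pactM lv0 raddf0.
- by rewrite -pactM mulrCA [q * _]mulrC -Dl pactM lv0 raddf0.
- by rewrite -pactD addrC Duw pact1.
Qed.

Definition gcdp_seq (rhos : seq {poly K}) : {poly K} := foldr (@gcdp K) 0 rhos.

Definition lcmp_seq (rhoss : seq (seq {poly K})) : {poly K} :=
  foldr lcmp 1 (map gcdp_seq rhoss).

Lemma pact_gcdp_seq_eq0 rhos v :
  pact th (gcdp_seq rhos) v = 0 <-> forall rho, rho \in rhos -> pact th rho v = 0.
Proof.
elim: rhos => [|rho rhos IH] /=; first by rewrite pact0.
rewrite pact_gcdp_eq0 IH; split=> [[rho_v0 rhos_v0] eta | rhos_v0].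
  by rewrite inE => /orP[/eqP -> // | /rhos_v0].
by split=> [|eta eta_in]; apply: rhos_v0; rewrite inE ?eqxx ?eta_in ?orbT.
Qed.

End KernelSums.

Section IrreducibleFactors.
Variable K : fieldType.
Implicit Types f g p q : {poly K}.

Lemma monic_irr_size f : monic_irr f -> (1 < size f)%N.
Proof. by case=> _ []. Qed.

Lemma monic_irr_neq0 f : monic_irr f -> f != 0.
Proof. by case=> _ /irredp_neq0. Qed.

Lemma monic_irr_scale f : irreducible_poly f -> monic_irr ((lead_coef f)^-1 *: f).
Proof.
move=> irr_f; have f_neq0 := irredp_neq0 irr_f.
have lcV_neq0 : (lead_coef f)^-1 != 0 by rewrite invr_eq0 lead_coef_eq0.
split; first by rewrite monicE lead_coefZ mulVf ?lead_coef_eq0.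
split=> [|q sq]; first by rewrite size_scale; case: irr_f.
by rewrite dvdpZr // => /(irr_f q sq) /eqp_trans; apply; rewrite eqp_sym eqp_scale.
Qed.

Lemma monic_irr_dvdp_eq f g : monic_irr f -> monic_irr g -> g %| f -> g = f.
Proof.
move=> [mon_f irr_f] g_mi dvd_gf; have [e|e] := irredp_XsubCP irr_f dvd_gf.
  by move: (monic_irr_size g_mi); rewrite (eqp_size e) size_poly1.
by apply/eqP; rewrite -eqp_monic //; case: g_mi.
Qed.

Lemma monic_irr_coprime f g : monic_irr f -> monic_irr g -> f != g -> coprimep f g.
Proof.
move=> f_mi g_mi neq_fg; rewrite irreducible_poly_coprime; last by case: f_mi.
by apply: contra neq_fg => /(monic_irr_dvdp_eq g_mi f_mi) ->.
Qed.

Lemma monic_irr_dvdp_mul f p q : monic_irr f -> f %| p * q -> (f %| p) || (f %| q).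
Proof.
move=> [_ irr_f]; have [//|ndvd_fp /=] := boolP (f %| p).
by rewrite Gauss_dvdpr // irreducible_poly_coprime.
Qed.

Lemma exists_monic_irr_dvdp p : (1 < size p)%N -> exists2 f, monic_irr f & f %| p.
Proof.
move=> p_gt1; have p_neq0 : p != 0 by rewrite -size_poly_gt0 ltnW.
pose P n := `[< exists q, [/\ (1 < size q)%N, q %| p & size q = n] >].
have : exists n, P n by exists (size p); apply/asboolP; exists p.
case/ex_minnP=> _ /asboolP[q [q_gt1 dvd_qp <-]] q_min.
have q_neq0 : q != 0 by rewrite -size_poly_gt0 ltnW.
have irr_q : irreducible_poly q. (* a divisor of least size > 1 *)
  split=> // d d_neq1 dvd_dq; rewrite -dvdp_size_eqp // eqn_leq dvdp_leq //=.
  apply: q_min; apply/asboolP; exists d; split; rewrite ?(dvdp_trans dvd_dq) //.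
  rewrite ltn_neqAle eq_sym d_neq1 size_poly_gt0.
  by apply: contraNneq q_neq0 => d0; move: dvd_dq; rewrite d0 dvd0p.
exists ((lead_coef q)^-1 *: q); first exact: monic_irr_scale.
by rewrite dvdpZl // invr_eq0 lead_coef_eq0.
Qed.

Lemma size_divp_monic_irr p f : monic_irr f -> p != 0 -> (size (p %/ f)%R < size p)%N.
Proof.
move=> f_mi p_neq0; rewrite size_divp ?monic_irr_neq0 // ltn_subrL size_poly_gt0 p_neq0.
by rewrite -subn1 subn_gt0 monic_irr_size.
Qed.

Lemma monic_irr_divisors p : p != 0 ->
  exists s, uniq s /\ forall f, f \in s <-> monic_irr f /\ f %| p.
Proof.
have [n] := ubnP (size p); elim: n p => // n IHn p /ltnSE le_pn p_neq0.
have [p_le1|p_gt1] := leqP (size p) 1.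
  exists [::]; split=> // f; split=> // -[f_mi /(dvdp_leq p_neq0)].
  by move/leq_trans/(_ p_le1); rewrite leqNgt monic_irr_size.
have [f f_mi dvd_fp] := exists_monic_irr_dvdp p_gt1.
have Dp : p %/ f * f = p by rewrite divpK.
have q_neq0 : p %/ f != 0 by apply: contraNneq p_neq0 => q0; rewrite -Dp q0 mul0r.
have [|s [uniq_s Ds]] := IHn (p %/ f) _ q_neq0.
  exact: leq_trans (size_divp_monic_irr f_mi p_neq0) le_pn.
exists (undup (f :: s)); split=> [|g]; first exact: undup_uniq.
rewrite mem_undup in_cons; split.
  by case/orP=> [/eqP -> // | /Ds[g_mi dvd_g]]; rewrite -Dp dvdp_mulr.
move=> [g_mi]; rewrite -Dp => /(monic_irr_dvdp_mul g_mi)/orP[/(conj g_mi)/Ds -> | ].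
  by rewrite orbT.
by move/(monic_irr_dvdp_eq f_mi g_mi) ->; rewrite eqxx.
Qed.

End IrreducibleFactors.

Section Multiplicity.
Variable K : fieldType.
Implicit Types f g h : {poly K}.

Lemma mult_exists f h : exists n, (size h <= n)%N || ~~ (f ^+ n.+1 %| h).
Proof. by exists (size h); rewrite leqnn. Qed.

(* The bound [size h] only makes the minimum exist; it yields [mult f 0 = 0]. *)
Definition mult f h : nat := ex_minn (mult_exists f h).

Variables (f h : {poly K}).
Hypotheses (f_gt1 : (1 < size f)%N) (h_neq0 : h != 0).

Lemma dvdp_exp_size n : f ^+ n.+1 %| h -> (n < size h)%N.
Proof.
move=> /(dvdp_leq h_neq0); apply: leq_trans.
have f_neq0 : f != 0 by rewrite -size_poly_gt0 ltnW.
have : (0 < size (f ^+ n.+1))%N by rewrite size_poly_gt0 expf_neq0.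
move/prednK <-; rewrite size_exp ltnS.
by rewrite (leq_trans (leqnSn n)) // leq_pmull // -subn1 subn_gt0.
Qed.

Lemma multP : f ^+ mult f h %| h /\ ~~ (f ^+ (mult f h).+1 %| h).
Proof.
rewrite /mult; case: ex_minnP => m m_ok m_min.
have ndvd : ~~ (f ^+ m.+1 %| h).
  case/orP: m_ok => // le_hm; apply/negP => /dvdp_exp_size.
  by rewrite ltnNge le_hm.
split=> //; case: m m_ok m_min ndvd => [|m] _ m_min _; first by rewrite dvd1p.
have : ~~ ((size h <= m)%N || ~~ (f ^+ m.+1 %| h)).
  by apply/negP => /m_min; rewrite ltnn.
by rewrite negb_or negbK => /andP[].
Qed.

Lemma mult_eq n : f ^+ n %| h -> ~~ (f ^+ n.+1 %| h) -> mult f h = n.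
Proof.
move=> dvd_n ndvd_n; have [dvd_m ndvd_m] := multP.
case: (ltngtP (mult f h) n) => // lt_mn.
  by move: ndvd_m; rewrite (dvdp_trans (dvdp_exp2l _ lt_mn) dvd_n).
by move: ndvd_n; rewrite (dvdp_trans (dvdp_exp2l _ lt_mn) dvd_m).
Qed.

Lemma mult_ndvdp : ~~ (f %| h) -> mult f h = 0%N.
Proof. by move=> ndvd; apply: mult_eq; rewrite ?expr0 ?dvd1p ?expr1. Qed.

End Multiplicity.

Section MultiplicityMul.
Variable K : fieldType.
Implicit Types f g h : {poly K}.

Lemma mult_mul_self f h : monic_irr f -> h != 0 -> mult f (h * f) = (mult f h).+1.
Proof.
move=> f_mi h_neq0; have f_gt1 := monic_irr_size f_mi.
have [dvd_m ndvd_m] := multP f_gt1 h_neq0.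
have f_neq0 := monic_irr_neq0 f_mi.
apply: mult_eq => //; first by rewrite mulf_neq0.
  by rewrite exprSr dvdp_mul.
by rewrite exprSr dvdp_mul2r.
Qed.

Lemma mult_mul_other f g h : monic_irr f -> monic_irr g -> g != f -> h != 0 ->
  mult g (h * f) = mult g h.
Proof.
move=> f_mi g_mi neq_gf h_neq0; have g_gt1 := monic_irr_size g_mi.
have [dvd_m ndvd_m] := multP g_gt1 h_neq0.
have cop n : coprimep (g ^+ n) f.
  exact/coprimep_expl/monic_irr_coprime.
have f_neq0 := monic_irr_neq0 f_mi.
apply: mult_eq => //; first by rewrite mulf_neq0.
  by rewrite Gauss_dvdpl ?cop.
by rewrite Gauss_dvdpl ?cop.
Qed.

End MultiplicityMul.

Section KernelInclusion.
Variables (K : fieldType) (V : lmodType K) (th : {linear V -> V}).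
Implicit Types f g h q r : {poly K}.
Local Notation pact := (pact th).

Definition ker_sub r h := forall v, pact r v = 0 -> pact h v = 0.

Definition ker_stable f n := ker_sub (f ^+ n.+1) (f ^+ n).

Lemma ker_stableS f n : ker_stable f n -> ker_stable f n.+1.
Proof.
move=> st_n v; rewrite exprSr pactM => /st_n.
by rewrite -pactM -exprSr exprS mulrC pactM.
Qed.

Lemma ker_stable_le f n m : (n <= m)%N -> ker_stable f n -> ker_stable f m.
Proof.
move=> le_nm st_n; elim: m le_nm => [|m IHm]; first by rewrite leqn0 => /eqP <-.
by rewrite leq_eqVlt ltnS => /orP[/eqP <- // | /IHm /ker_stableS].
Qed.

Lemma ker_sub_split h (m r : {poly K}) : h %| m -> m %| r ->
  ker_sub r h <-> ker_sub r m /\ ker_sub m h.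
Proof.
move=> dvd_hm dvd_mr; split=> [sub_rh | [sub_rm sub_mh] v /sub_rm /sub_mh //].
by split=> v; [move/sub_rh; apply: pact_dvdp_eq0 | move/(pact_dvdp_eq0 dvd_mr)/sub_rh].
Qed.

Lemma ker_sub_mul_irr f h : monic_irr f -> h != 0 ->
  ker_sub (h * f) h <-> ker_stable f (mult f h).
Proof.
(* With h = h' f^a and f coprime to h', a Bezout relation between f^(a+1)
   and h' isolates the f-primary part of both kernels. *)
move=> f_mi h_neq0; have [dvd_a ndvd_a] := multP (monic_irr_size f_mi) h_neq0.
set a := mult f h in dvd_a ndvd_a *; set h' := h %/ f ^+ a.
have Dh : h = h' * f ^+ a by rewrite divpK.
have ndvd_fh' : ~~ (f %| h').
  by apply: contraNN ndvd_a => dvd_fh'; rewrite Dh exprS dvdp_mul ?dvdpp.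
have /Bezout_eq1_coprimepP[[u w] /= Duw] : coprimep (f ^+ a.+1) h'.
  by apply: coprimep_expl; rewrite irreducible_poly_coprime //; case: f_mi.
split=> [sub_hf v fv0 | st_a v hfv0].
  have : pact (h * f) (pact w v) = 0.
    rewrite -pactM (_ : _ * w = h' * w * f ^+ a.+1) ?pactM ?fv0 ?raddf0 //.
    by rewrite Dh exprSr; ring.
  move/sub_hf; rewrite -pactM (_ : h * w = f ^+ a * (1 - u * f ^+ a.+1)).
    by rewrite pactM pactB pact1 pactM fv0 raddf0 subr0.
  by rewrite -Duw Dh exprSr; ring.
have : pact (f ^+ a.+1) (pact h' v) = 0.
  by rewrite -pactM (_ : _ * h' = h * f) // Dh exprSr; ring.
by move/st_a; rewrite -pactM mulrC -Dh.
Qed.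

Lemma ker_stable_divisors_mul f h q : monic_irr f -> h != 0 ->
  (forall g, monic_irr g -> g %| q * f -> ker_stable g (mult g h)) <->
  (forall g, monic_irr g -> g %| q -> ker_stable g (mult g (h * f))) /\
  ker_stable f (mult f h).
Proof.
move=> f_mi h_neq0; split=> [st | [st st_f]].
  have st_f : ker_stable f (mult f h) by apply: st; rewrite ?dvdp_mull.
  split=> // g g_mi dvd_gq; have [-> | neq_gf] := eqVneq g f.
    by rewrite mult_mul_self //; apply: ker_stableS.
  by rewrite mult_mul_other //; apply: st; rewrite ?dvdp_mulr.
move=> g g_mi /(monic_irr_dvdp_mul g_mi)/orP[dvd_gq | dvd_gf].
  have [-> // | neq_gf] := eqVneq g f.
  by have := st g g_mi dvd_gq; rewrite mult_mul_other.
by rewrite (monic_irr_dvdp_eq f_mi g_mi dvd_gf).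
Qed.

Lemma ker_sub_mulP h q : h != 0 -> q != 0 ->
  ker_sub (h * q) h <-> forall f, monic_irr f -> f %| q -> ker_stable f (mult f h).
Proof.
have [n] := ubnP (size q); elim: n h q => // n IHn h q /ltnSE le_qn h_neq0 q_neq0.
have [q_le1 | q_gt1] := leqP (size q) 1.
  have Dq := size1_polyC q_le1.
  split=> [_ f f_mi /(dvdp_leq q_neq0) | _ v].
    by move/leq_trans/(_ q_le1); rewrite leqNgt monic_irr_size.
  rewrite Dq mulrC pactM pactC => /eqP; rewrite scaler_eq0 => /orP[/eqP q0 | /eqP //].
  by move: q_neq0; rewrite Dq q0 eqxx.
have [f f_mi dvd_fq] := exists_monic_irr_dvdp q_gt1.
set q1 := q %/ f; have Dq : q = q1 * f by rewrite divpK.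
have q1_neq0 : q1 != 0 by apply: contraNneq q_neq0 => q10; rewrite Dq q10 mul0r.
have hf_neq0 : h * f != 0 by rewrite mulf_neq0 // monic_irr_neq0.
have IH := IHn (h * f) q1 (leq_trans (size_divp_monic_irr f_mi q_neq0) le_qn) hf_neq0 q1_neq0.
rewrite Dq ker_stable_divisors_mul // -IH -ker_sub_mul_irr //.
rewrite (_ : h * (q1 * f) = h * f * q1); last by rewrite mulrA mulrAC.
by apply: ker_sub_split; rewrite dvdp_mulIl.
Qed.

Lemma ker_subP h r : h %| r -> r != 0 ->
  ker_sub r h <-> forall f, monic_irr f -> f %| r %/ h -> ker_stable f (mult f h).
Proof.
move=> dvd_hr r_neq0; have Dr : r = h * (r %/ h) by rewrite mulrC divpK.
rewrite {1}Dr; apply: ker_sub_mulP.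
  by apply: contraNneq r_neq0 => h0; rewrite Dr h0 mul0r.
by apply: contraNneq r_neq0 => q0; rewrite Dr q0 mulr0.
Qed.

End KernelInclusion.

Section OptionMin.
Variable A : nat -> Prop.

Definition omin : option nat :=
  if pselect (exists n, A n) is left exA then
    Some (ex_minn (let: ex_intro n An := exA in ex_intro _ n (asboolT An)))
  else None.

Lemma omin_some n : omin = Some n -> A n /\ forall m, A m -> (n <= m)%N.
Proof.
rewrite /omin; case: pselect => // -[m Am] [<-].
case: ex_minnP => k /asboolP Ak k_min; split=> // j Aj.
exact/k_min/asboolP.
Qed.

Lemma omin_le m : A m -> exists2 n, omin = Some n & (n <= m)%N.
Proof.
move=> Am; case En: omin => [n|]; first by exists n => //; apply: (omin_some En).2.
by move: En; rewrite /omin; case: pselect => // -[]; exists m.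
Qed.

End OptionMin.

Section Threshold.
Variable K : fieldType.
Implicit Types f g h r : {poly K}.

Definition pair_mult (Q : {poly K} -> {poly K} -> Prop) f n :=
  exists h r, [/\ Q h r, f %| r %/ h & n = mult f h].

(* [None] stands for C(f) = oo: no pair of [Q] constrains [f]. *)
Definition stable_threshold Q f : option nat := omin (pair_mult Q f).

Lemma ker_sub_familyP (V : lmodType K) (th : {linear V -> V}) Q :
  (forall h r, Q h r -> h %| r /\ r != 0) ->
  (forall h r, Q h r -> ker_sub th r h) <->
  (forall f, monic_irr f -> forall n, stable_threshold Q f = Some n -> ker_stable th f n).
Proof.
move=> Q_dvd; split=> [sub_Q f f_mi n | st_Q h r Qhr].
  rewrite /stable_threshold => /omin_some[[h [r [Qhr dvd_f ->]]] _].
  have [dvd_hr r_neq0] := Q_dvd _ _ Qhr.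
  by apply: (ker_subP th dvd_hr r_neq0).1 => //; apply: sub_Q.
have [dvd_hr r_neq0] := Q_dvd _ _ Qhr; apply/(ker_subP th dvd_hr r_neq0) => f f_mi dvd_f.
have [|n En le_n] := @omin_le (pair_mult Q f) (mult f h); first by exists h, r.
exact: ker_stable_le le_n (st_Q f f_mi n En).
Qed.

End Threshold.

Section PowerProducts.
Variables (K : fieldType) (e : {poly K} -> nat).
Implicit Types (f g h : {poly K}) (s : seq {poly K}).

Local Notation P s := (\prod_(f <- s) f ^+ e f).

Lemma prod_pow_neq0 s : {in s, forall f, monic_irr f} -> P s != 0.
Proof.
by move=> s_mi; rewrite prodf_seq_neq0; apply/allP => f /s_mi/monic_irr_neq0/expf_neq0 ->.
Qed.

Lemma coprimep_pow_prod_pow g k s : {in s, forall f, monic_irr f} ->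
  monic_irr g -> g \notin s -> coprimep (g ^+ k) (P s).
Proof.
move=> s_mi g_mi g_notin; rewrite big_seq; apply: (big_ind (coprimep (g ^+ k))).
- exact: coprimep1.
- by move=> p q cop_p cop_q; rewrite coprimepMr cop_p.
move=> f f_in; apply/coprimep_expl/coprimep_expr/monic_irr_coprime => //.
  exact: s_mi.
by apply: contraNneq g_notin => ->.
Qed.

Lemma mult_prod_pow g s : uniq s -> {in s, forall f, monic_irr f} -> monic_irr g ->
  mult g (P s) = if g \in s then e g else 0%N.
Proof.
move=> uniq_s s_mi g_mi; have g_gt1 := monic_irr_size g_mi.
have Ps_neq0 := prod_pow_neq0 s_mi.
case: ifPn => [g_in | g_notin]; last first.
  apply: mult_ndvdp => //; rewrite -irreducible_poly_coprime; last by case: g_mi.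
  by rewrite -[g]expr1 coprimep_pow_prod_pow.
have rem_mi : {in rem g s, forall f, monic_irr f} by move=> f /mem_rem/s_mi.
have g_notin : g \notin rem g s by rewrite mem_rem_uniqF.
have g_neq0 := monic_irr_neq0 g_mi.
move: Ps_neq0; rewrite (big_rem g g_in) /= => Ps_neq0.
apply: mult_eq => //; first exact: dvdp_mulIl.
rewrite exprSr dvdp_mul2l ?expf_neq0 // -irreducible_poly_coprime; last by case: g_mi.
by rewrite -[g]expr1 coprimep_pow_prod_pow.
Qed.

Lemma prod_pow_dvdp h s : uniq s -> {in s, forall f, monic_irr f} ->
  {in s, forall f, f ^+ e f %| h} -> P s %| h.
Proof.
elim: s => [|f s IHs] /= => [_ _ _ | /andP[f_notin uniq_s] s_mi dvd_h].
  by rewrite big_nil dvd1p.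
have s'_mi : {in s, forall g, monic_irr g}.
  by move=> g g_in; apply: s_mi; rewrite inE g_in orbT.
rewrite big_cons Gauss_dvdp ?dvd_h ?mem_head ?IHs //=.
  by move=> g g_in; rewrite dvd_h // inE g_in orbT.
by apply: coprimep_pow_prod_pow => //; apply: s_mi; rewrite mem_head.
Qed.

End PowerProducts.

Section CappedMultiplicity.
Variables (K : fieldType) (V : lmodType K) (th : {linear V -> V}).
Implicit Types (f g h : {poly K}) (s : seq {poly K}).

Definition capped_mult (c : {poly K} -> option nat) h f : nat :=
  if c f is Some n then minn (mult f h) n else mult f h.

Lemma capped_mult_le c h f : (capped_mult c h f <= mult f h)%N.
Proof. by rewrite /capped_mult; case: (c f) => // n; rewrite geq_minl. Qed.

Lemma full_ker_capped_prodP c h0 s : h0 != 0 -> uniq s -> {in s, forall f, monic_irr f} ->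
  (forall f, monic_irr f -> f \notin s -> capped_mult c h0 f = 0%N) ->
  ((forall v, pact th h0 v = 0) /\
   (forall f, monic_irr f -> forall n, c f = Some n -> ker_stable th f n)) <->
  forall v, pact th (\prod_(f <- s) f ^+ capped_mult c h0 f) v = 0.
Proof.
move=> h0_neq0 uniq_s s_mi e_out; set e := capped_mult c h0; set m := \prod_(f <- s) _.
have m_neq0 : m != 0 by apply: prod_pow_neq0.
have mult_m f : monic_irr f -> mult f m = e f.
  by move=> f_mi; rewrite mult_prod_pow //; case: ifPn => // f_notin; rewrite /e e_out.
have m_dvd : m %| h0.
  apply: prod_pow_dvdp => // f /s_mi/monic_irr_size f_gt1.
  exact: dvdp_trans (dvdp_exp2l _ (capped_mult_le _ _ _)) (multP f_gt1 h0_neq0).1.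
split=> [[h0_ker st_c] v | m_ker].
  suff sub_h0m : ker_sub th h0 m by apply/sub_h0m/h0_ker.
  apply/(ker_subP th m_dvd h0_neq0) => f f_mi dvd_f; rewrite mult_m //.
  have lt_e : (e f < mult f h0)%N.
    rewrite ltn_neqAle capped_mult_le andbT; apply/eqP => e_eq.
    have [_ /negP] := multP (monic_irr_size f_mi) h0_neq0; apply.
    have [dvd_m _] := multP (monic_irr_size f_mi) m_neq0.
    rewrite -e_eq -(divpK m_dvd) exprS dvdp_mul //.
    by rewrite -(mult_m f f_mi).
  move: lt_e; rewrite /e /capped_mult; case E: (c f) => [n|]; last by rewrite ltnn.
  by rewrite gtn_min ltnn /= => /ltnW/minn_idPr ->; apply: st_c E.
split=> [v | f f_mi n En]; first exact: pact_dvdp_eq0 m_dvd (m_ker v).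
have st_m : ker_stable th f (mult f m).
  by apply/(ker_sub_mul_irr th f_mi m_neq0) => v _; apply: m_ker.
apply: ker_stable_le st_m; rewrite mult_m // /e /capped_mult En.
exact: geq_minr.
Qed.

End CappedMultiplicity.

Section KernelEquations.
Variables (K : fieldType) (J : Type) (R : J -> {poly K} * {poly K}).
Implicit Types (f h r : {poly K}) (c : {poly K} -> option nat).

Definition ker_eqs (V : lmodType K) (th : {linear V -> V}) : Prop :=
  forall j v, pact th (R j).1 v = 0 <-> pact th (R j).2 v = 0.

Definition is_C_endo (V : lmodType K) (th : {linear V -> V}) c (d : option nat) : Prop :=
  if d is Some _ then forall s, finite_support c s -> forall v, pact th (mipo_along c s) v = 0
  else forall f, monic_irr f -> forall n, c f = Some n -> ker_stable th f n.

Definition kernel_pair h r :=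
  exists j, (r = (R j).1 \/ r = (R j).2) /\ h = gcdp (R j).1 (R j).2.

Lemma kernel_pair_dvdp h r : kernel_pair h r -> h %| r.
Proof. by case=> j [[->|->] ->]; rewrite ?dvdp_gcdl ?dvdp_gcdr. Qed.

Lemma ker_eqs_pairsP (V : lmodType K) (th : {linear V -> V}) :
  ker_eqs th <-> forall h r, kernel_pair h r -> ker_sub th r h.
Proof.
split=> [eqs h r [j [Dr ->]] v rv0 | sub j v].
  by apply/pact_gcdp_eq0; case: Dr rv0 => -> rv0; split=> //; apply/(eqs j v).
have [sub1 sub2] : ker_sub th (R j).1 (gcdp (R j).1 (R j).2) /\
                   ker_sub th (R j).2 (gcdp (R j).1 (R j).2).
  by split; apply: sub; exists j; split; [left | | right |].
by split=> [/sub1/pact_gcdp_eq0[] | /sub2/pact_gcdp_eq0[]].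
Qed.

Lemma transcendental_ker_eqsP : ~ (exists2 h0, h0 != 0 & kernel_pair h0 0) ->
  forall (V : lmodType K) (th : {linear V -> V}),
  ker_eqs th <-> is_C_endo th (stable_threshold (fun h r => kernel_pair h r /\ r != 0)) None.
Proof.
move=> no_h0 V th; have Q_dvd h r : kernel_pair h r /\ r != 0 -> h %| r /\ r != 0.
  by case=> /kernel_pair_dvdp.
rewrite ker_eqs_pairsP /= -(ker_sub_familyP th Q_dvd).
split=> [sub h r [pair_hr _] | sub h r pair_hr]; first exact: sub.
have [r0 | r_neq0] := eqVneq r 0; last exact: sub.
have [h0 | h_neq0] := eqVneq h 0; first by rewrite r0 h0 => v.
by case: no_h0; exists h => //; rewrite -r0.
Qed.

Lemma ker_sub_gcdp_full (V : lmodType K) (th : {linear V -> V})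
    (Q : {poly K} -> {poly K} -> Prop) h0 : Q h0 0 ->
  (forall h r, Q h r -> ker_sub th r h) <->
  (forall v, pact th h0 v = 0) /\
  (forall h r, Q h r -> ker_sub th (gcdp r h0) (gcdp h h0)).
Proof.
move=> Q_h0; split=> [sub | [h0_ker sub] h r Qhr v rv0].
  have h0_ker v : pact th h0 v = 0 by apply: (sub _ _ Q_h0); rewrite pact0.
  split=> // h r Qhr v /pact_gcdp_eq0[rv0 _].
  by apply/pact_gcdp_eq0; split=> //; apply: sub rv0.
have : pact th (gcdp h h0) v = 0 by apply: (sub h r Qhr); apply/pact_gcdp_eq0.
by case/pact_gcdp_eq0.
Qed.

Lemma algebraic_ker_eqsP h0 : h0 != 0 -> kernel_pair h0 0 ->
  exists e s, finite_support (fun f => Some (e f)) s /\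
    forall (V : lmodType K) (th : {linear V -> V}),
    ker_eqs th <-> is_C_endo th (fun f => Some (e f))
                              (Some (\sum_(f <- s) (size f).-1 * e f)%N).
Proof.
move=> h0_neq0 pair_h0.
pose Q h' r' := exists h r, [/\ kernel_pair h r, h' = gcdp h h0 & r' = gcdp r h0].
have Q_dvd h' r' : Q h' r' -> h' %| r' /\ r' != 0.
  case=> h [r [/kernel_pair_dvdp dvd_hr -> ->]]; split.
    by rewrite dvdp_gcd dvdp_gcdr andbT (dvdp_trans (dvdp_gcdl _ _)).
  by rewrite gcdp_eq0 negb_and h0_neq0 orbT.
pose e := capped_mult (stable_threshold Q) h0.
have [s [uniq_s Ds]] := monic_irr_divisors h0_neq0.
have s_mi : {in s, forall f, monic_irr f} by move=> f /Ds[].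
have e_out f : monic_irr f -> f \notin s -> e f = 0%N.
  move=> f_mi f_notin; apply/eqP; rewrite -leqn0 -(mult_ndvdp (monic_irr_size f_mi) h0_neq0).
    exact: capped_mult_le.
  by apply: contra f_notin => dvd_f; apply/Ds.
have fs : finite_support (fun f => Some (e f)) s.
  by split=> // f f_mi f_notin; rewrite e_out.
exists e, s; split=> // V th; rewrite ker_eqs_pairsP (ker_sub_gcdp_full th pair_h0).
apply: (@iff_trans _ ((forall v, pact th h0 v = 0) /\ forall h r, Q h r -> ker_sub th r h)).
  split=> -[h0_ker sub]; split=> // h r.
    by case=> h' [r' [pair_hr -> ->]]; apply: sub.
  by move=> pair_hr; apply: sub; exists h, r.
rewrite (ker_sub_familyP th Q_dvd); split=> [H s' [uniq' mi' out' _] | H].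
  apply: (full_ker_capped_prodP th h0_neq0 uniq' mi' _).1 H.
  by move=> f f_mi /(out' f f_mi) [].
exact/(full_ker_capped_prodP th h0_neq0 uniq_s s_mi e_out).2/H.
Qed.

Lemma ker_eqs_configuration : exists c d,
  (d = None \/ exists s, finite_support c s /\
     d = Some (\sum_(f <- s) (size f).-1 * odflt 0 (c f))%N) /\
  forall (V : lmodType K) (th : {linear V -> V}), ker_eqs th <-> is_C_endo th c d.
Proof.
have [[h0 h0_neq0 pair_h0] | no_h0] := pselect (exists2 h0, h0 != 0 & kernel_pair h0 0).
  have [e [s [fs e_eqs]]] := algebraic_ker_eqsP h0_neq0 pair_h0.
  exists (fun f => Some (e f)), (Some (\sum_(f <- s) (size f).-1 * e f)%N).
  by split=> //; right; exists s.
exists (stable_threshold (fun h r => kernel_pair h r /\ r != 0)), None.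
by split; [left | exact: transcendental_ker_eqsP].
Qed.

End KernelEquations.

Section DefinableSpace.
Variables (L : language) (K : fieldType) (M : structure L) (o : vsops K M) (theta : M -> M).
Hypotheses (o_vs : is_vspace o) (theta_lin : theta_axioms o theta).

Let vin0 : vin o (vzero o). Proof. by have [[]] := o_vs. Qed.
Let vinD u v : vin o u -> vin o v -> vin o (vadd o u v).
Proof. by have [[_ vinD _ _ _] _] := o_vs; apply: vinD. Qed.
Let vinZ a v : vin o v -> vin o (vscale o a v).
Proof. by have [[_ _ vinZ _ _] _] := o_vs; apply: vinZ. Qed.
Let vinT v : vin o v -> vin o (theta v).
Proof. by have [thV _ _ _] := theta_lin; apply: thV. Qed.

Definition vspace_of : Type := {x : M | vin o x}.
Local Notation VT := vspace_of.

HB.instance Definition _ := gen_eqMixin VT.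
HB.instance Definition _ := gen_choiceMixin VT.

Lemma vspace_of_inj (x y : VT) : sval x = sval y -> x = y.
Proof. by case: x => x px; case: y => y py /= xy; apply: eq_exist. Qed.

Definition vs_zero : VT := exist _ _ vin0.
Definition vs_add (x y : VT) : VT := exist _ _ (vinD (svalP x) (svalP y)).
Definition vs_scale a (x : VT) : VT := exist _ _ (vinZ a (svalP x)).

Lemma vs_addA : associative vs_add.
Proof.
move=> x y z; apply: vspace_of_inj; have [[_ _ _ addA _] _] := o_vs.
by apply: addA; apply: svalP.
Qed.

Lemma vs_addC : commutative vs_add.
Proof.
move=> x y; apply: vspace_of_inj; have [[_ _ _ _ addC] _] := o_vs.
by apply: addC; apply: svalP.
Qed.

Lemma vs_add0 : left_id vs_zero vs_add.
Proof.
move=> x; apply: vspace_of_inj; have [_ [[add0 _ _] _]] := o_vs.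
by apply: add0; apply: svalP.
Qed.

Lemma vs_addN : left_inverse vs_zero (vs_scale (-1)) vs_add.
Proof.
move=> [x px]; apply: vspace_of_inj => /=.
have [[_ _ _ _ addC] [[_ addN _] _]] := o_vs.
by rewrite addC ?addN //; apply: vinZ.
Qed.

HB.instance Definition _ := GRing.isZmodule.Build VT vs_addA vs_addC vs_add0 vs_addN.

Lemma vs_scaleA a b (x : VT) : vs_scale a (vs_scale b x) = vs_scale (a * b) x.
Proof.
apply: vspace_of_inj; have [_ [_ [scaleA _ _]]] := o_vs.
by rewrite /= scaleA //; apply: svalP.
Qed.

Lemma vs_scale1 : left_id 1 vs_scale.
Proof.
move=> x; apply: vspace_of_inj; have [_ [[_ _ scale1] _]] := o_vs.
by apply: scale1; apply: svalP.
Qed.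

Lemma vs_scaleDr : right_distributive vs_scale +%R.
Proof.
move=> a x y; apply: vspace_of_inj; have [_ [_ [_ scaleDr _]]] := o_vs.
by apply: scaleDr; apply: svalP.
Qed.

Lemma vs_scaleDl (x : VT) : {morph vs_scale^~ x : a b / a + b}.
Proof.
move=> a b; apply: vspace_of_inj; have [_ [_ [_ _ scaleDl]]] := o_vs.
by apply: scaleDl; apply: svalP.
Qed.

HB.instance Definition _ :=
  GRing.Zmodule_isLmodule.Build K VT vs_scaleA vs_scale1 vs_scaleDr vs_scaleDl.

Definition vs_theta (x : VT) : VT := exist _ _ (vinT (svalP x)).

Lemma vs_theta_linear : linear vs_theta.
Proof.
move=> a x y; apply: vspace_of_inj => /=.
have [_ thD thZ _] := theta_lin.
by rewrite thD ?thZ //; apply: svalP || apply/vinZ/svalP.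
Qed.

HB.instance Definition _ :=
  GRing.isLinear.Build K VT VT *:%R vs_theta vs_theta_linear.

Local Notation pact := (pact vs_theta).

Lemma sval_pact p (x : VT) : sval (pact p x) = peval o theta p (sval x).
Proof.
have sval_iter i : sval (iter i vs_theta x) = iter i theta (sval x) by elim: i => //= i ->.
rewrite /pact -(big_mkord xpredT (fun i => p`_i *: iter i vs_theta x)) /index_iota subn0.
rewrite /peval; elim: (iota _ _) => [|i l IHl]; first by rewrite big_nil.
by rewrite big_cons /= IHl sval_iter.
Qed.

Lemma inKer_pact p (x : VT) : inKer o theta p (sval x) <-> pact p x = 0.
Proof.
rewrite /inKer -sval_pact; split=> [[_ px0] | ->]; first exact: vspace_of_inj.
by split=> //; apply: svalP.
Qed.

Lemma inCapKer_pact rhos (x : VT) :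
  inCapKer o theta rhos (sval x) <-> pact (gcdp_seq rhos) x = 0.
Proof.
rewrite pact_gcdp_seq_eq0; split=> [[_ ker_x] rho /ker_x/inKer_pact // | ker_x].
by split=> [|rho /ker_x/inKer_pact //]; apply: svalP.
Qed.

Lemma inSumCapKer_vin rhoss y : inSumCapKer o theta rhoss y -> vin o y.
Proof.
elim: rhoss y => [|rhos rhoss IH] y /=; first by move->.
by case=> w [u [[w_in _] /IH u_in ->]]; apply: vinD.
Qed.

Lemma inSumCapKer_pact rhoss (x : VT) :
  inSumCapKer o theta rhoss (sval x) <-> pact (lcmp_seq rhoss) x = 0.
Proof.
elim: rhoss x => [|rhos rhoss IH] x /=.
  by rewrite pact1; split=> [x0 | ->]; first exact: vspace_of_inj.
rewrite pact_lcmp_eq0; split=> [[w [u [w_in u_in Dx]]] | [a [b [a0 b0 ->]]]].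
  exists (exist _ w w_in.1), (exist _ u (inSumCapKer_vin u_in)); split.
  - exact/inCapKer_pact.
  - exact/IH.
  - exact: vspace_of_inj.
by exists (sval a), (sval b); split; [apply/inCapKer_pact | apply/IH |].
Qed.

Lemma forall_vin (P : M -> Prop) :
  (forall y, ~ vin o y -> P y) -> (forall x : VT, P (sval x)) -> forall y, P y.
Proof.
move=> P_out P_in y; have [y_in | /P_out //] := pselect (vin o y).
exact: (P_in (exist _ y y_in)).
Qed.

Lemma kernel_equationP e : kernel_equation o theta e <->
  forall x, pact (lcmp_seq e.1) x = 0 <-> pact (lcmp_seq e.2) x = 0.
Proof.
split=> [eq_e x | eq_e]; first by rewrite -!inSumCapKer_pact.
apply: forall_vin => [y y_out | x]; last by rewrite !inSumCapKer_pact.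
by split=> /inSumCapKer_vin.
Qed.

Lemma C_endoP c d : C_endo o theta c d <-> is_C_endo vs_theta c d.
Proof.
case: d => [k|] /=; split=> C_th.
- by move=> s fs x; apply/inKer_pact/(C_th s fs); apply: svalP.
- move=> s fs y; split=> [y_in | []//].
  by apply/(inKer_pact _ (exist _ y y_in))/C_th.
- by move=> f f_mi n cn x; rewrite -!inKer_pact => /(C_th f f_mi n cn).
move=> f f_mi n cn; apply: forall_vin => [y y_out | x]; first by split=> -[].
rewrite !inKer_pact; split; last exact: C_th.
by apply: pact_dvdp_eq0; rewrite exprS dvdp_mulIr.
Qed.

Lemma vspace_of_nontrivial : vs_infinite o -> exists x : VT, x != 0.
Proof.
move=> /(_ [:: vzero o]) [v [v_in v_notin]]; exists (exist _ v v_in).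
by apply/eqP => /(congr1 sval) /= v0; apply: v_notin; left.
Qed.

End DefinableSpace.

Section Definability.
Variables (L : language) (K : fieldType) (D : vsdef L K) (M : structure L).
Variables (o1 o : vsops K M).
Hypotheses (o1_def : defines D o1) (o_def : defines D o).

Lemma defines_vin x : vin o1 x <-> vin o x.
Proof. by case: o1_def o_def => in1 _ [in_ _]; rewrite -(in1 (fun=> x)) (in_ (fun=> x)). Qed.

Lemma defines_vzero : vzero o1 = vzero o.
Proof.
case: o1_def o_def => _ [z1 _] [_ [z _]].
exact/(z (fun=> vzero o1))/(z1 (fun=> vzero o1)).
Qed.

Lemma defines_vadd u v : vin o u -> vin o v -> vadd o1 u v = vadd o u v.
Proof.
move=> u_in v_in; case: o1_def o_def => _ [_ [add1 _]] [_ [_ [add _]]].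
pose s n := if n == 0%N then u else if n == 1%N then v else vadd o1 u v.
have : sat s (phiadd D) by apply/add1; split=> //; apply/defines_vin.
by case/add.
Qed.

Lemma defines_vscale a v : vin o v -> vscale o1 a v = vscale o a v.
Proof.
move=> v_in; case: o1_def o_def => _ [_ [_ sc1]] [_ [_ [_ sc]]].
pose s n := if n == 0%N then v else vscale o1 a v.
have : sat s (phisc D a) by apply/sc1; split=> //; apply/defines_vin.
by case/sc.
Qed.

Hypothesis o1_vs : is_vspace o1.

Lemma vin_vadd1 u v : vin o u -> vin o v -> vin o (vadd o1 u v).
Proof.
have [[_ inD _ _ _] _] := o1_vs.
by move=> /defines_vin u_in /defines_vin v_in; apply/defines_vin/inD.
Qed.

Lemma vin_vscale1 a v : vin o v -> vin o (vscale o1 a v).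
Proof.
have [[_ _ inZ _ _] _] := o1_vs.
by move=> /defines_vin v_in; apply/defines_vin/inZ.
Qed.

Lemma vin_vzero1 : vin o (vzero o1).
Proof. by have [[in0 _ _ _ _] _] := o1_vs; apply/defines_vin. Qed.

Local Hint Resolve vin_vadd1 vin_vscale1 vin_vzero1 : core.

Lemma defines_is_vspace : is_vspace o.
Proof.
have [[_ _ _ addA addC] [[add0 addN scale1] [scaleA scaleDr scaleDl]]] := o1_vs.
have in1 v : vin o v -> vin o1 v by move/defines_vin.
split; [split | split; split]=> *;
  rewrite -?defines_vscale -?defines_vadd -?defines_vzero; auto.
Qed.

End Definability.

Lemma mipo_along_eq1 (K : fieldType) (c : {poly K} -> option nat) s :
  finite_support c s -> (\sum_(f <- s) (size f).-1 * odflt 0 (c f))%N = 0%N ->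
  mipo_along c s = 1.
Proof.
case=> _ s_mi _ _ /eqP; rewrite sum_nat_seq_eq0 => /allP deg0.
rewrite /mipo_along big1_seq // => f /andP[_ f_in]; move: (deg0 f f_in).
rewrite /= muln_eq0 -subn1 subn_eq0 leqNgt (monic_irr_size (s_mi f f_in)) /=.
by move/eqP ->.
Qed.

Lemma C_endo_mipo_neq1 (L : language) (K : fieldType) (M : structure L) (o : vsops K M)
    (theta : M -> M) c s k :
  is_vspace o -> theta_axioms o theta -> vs_infinite o -> finite_support c s ->
  C_endo o theta c (Some k) -> mipo_along c s != 1.
Proof.
move=> o_vs th_ax o_inf fs /(C_endoP o_vs th_ax) C_th; apply/eqP => mipo1.
have [x /eqP] := vspace_of_nontrivial o_vs o_inf; apply.
by have := C_th s fs x; rewrite mipo1 pact1.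
Qed.

Definition lcmp_pairs (K : fieldType) (J : Type)
    (E : J -> seq (seq {poly K}) * seq (seq {poly K})) (j : J) :=
  (lcmp_seq (E j).1, lcmp_seq (E j).2).

Lemma kernel_equations_C_endoP (L : language) (T : theory L) (K : fieldType)
    (D : vsdef L K) (J : Type) (E : J -> seq (seq {poly K}) * seq (seq {poly K})) c d :
  defines_vs_in T D ->
  (forall (V : lmodType K) (th : {linear V -> V}),
     ker_eqs (lcmp_pairs E) th <-> is_C_endo th c d) ->
  forall (M : structure L) (theta : M -> M) (o : vsops K M),
  models T M -> theta_axioms o theta -> defines D o ->
  (forall j, kernel_equation o theta (E j)) <-> C_endo o theta c d.
Proof.
move=> [_ _ _ _ T_vs] eqs_C M theta o T_M th_ax o_def.
have [o1 [o1_def o1_vs _]] := T_vs M T_M.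
have o_vs := defines_is_vspace o1_def o_def o1_vs.
rewrite (C_endoP o_vs th_ax) -eqs_C.
split=> eqs j; first exact: (kernel_equationP o_vs th_ax (E j)).1 (eqs j).
exact/(kernel_equationP o_vs th_ax (E j))/eqs.
Qed.

Theorem corollary2p12 (L : language) (T : theory L) (K : fieldType)
    (D : vsdef L K) :
  is_theory T -> model_complete T -> defines_vs_in T D ->
  forall (J : Type) (E : J -> seq (seq {poly K}) * seq (seq {poly K})),
    (* the theory T_theta \cup {E j : j \in J} is consistent *)
    (exists (M : structure L) (theta : M -> M), models_TthetaE T D E theta) ->
    (* ... and is equivalent to T_theta^C for some kernel configuration C *)
    exists (c : {poly K} -> option nat) (d : option nat),
      is_kconf c d /\
      forall (M : structure L) (theta : M -> M),
        models_TthetaE T D E theta <-> models_TthetaC T D c d theta.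
Proof.
move=> _ _ T_vs J E [M0 [th0 [[T_M0 th0_ax] E_M0]]].
have [c [d [cd_shape eqs_C]]] := ker_eqs_configuration (lcmp_pairs E).
have E_C := kernel_equations_C_endoP T_vs eqs_C.
exists c, d; split.
  split=> // d0; case: cd_shape => [|[s [fs Dd]]]; first by rewrite d0.
  have [_ _ _ _ /(_ M0 T_M0) [o0 [o0_def o0_vs o0_inf]]] := T_vs.
  have : C_endo o0 th0 c d.
    by apply/(E_C M0 th0 o0 T_M0 (th0_ax o0 o0_def) o0_def)/E_M0.
  rewrite d0 => /(C_endo_mipo_neq1 o0_vs (th0_ax o0 o0_def) o0_inf fs)/negP; apply.
  by rewrite mipo_along_eq1 //; move: Dd; rewrite d0 => -[<-].
move=> M theta; split=> -[[T_M th_ax] H]; split=> // o o_def.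
  by apply/(E_C M theta o T_M (th_ax o o_def) o_def)/H.
by apply/(E_C M theta o T_M (th_ax o o_def) o_def)/H.
Qed.
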